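(* Let $G$ be a $2$-vertex-connected, unambiguously weighted rooted graph with positive edge weights and root edge $e=t_1t_2$, let $C_1,C_2,\dots$ be a greedy cycle sequence for $G$, and let $A_i$ be its $i$th ambit. Let $x$ be a point of $A_i$ (either a vertex of $A_i$, or a point interior to an edge of $A_i$, modeled by subdividing that edge into two edges of positive weight summing to the original weight). Then $A_i$ contains the shortest path in $G$ from $x$ to $t_1$ and the shortest path in $G$ from $x$ to $t_2$.
   Context: A rooted graph is an undirected graph with a designated root edge $e$; a cycle (connected $2$-regular subgraph) is rooted if it contains $e$. Edges have positive real weights; the weight of a path or cycle is the sum of its edge weights, and shortest means of minimum weight. $G$ is unambiguously weighted if no two distinct paths have the same weight and no two distinct cycles have the same weight. A greedy cycle sequence is a sequence of rooted cycles $C_1,C_2,\dots$ such that (1) each $C_i$ contains an edge that is not in any of $C_1,\dots,C_{i-1}$, and (2) subject to (1), each $C_i$ has minimum possible weight among rooted cycles. The $i$th ambit $A_i$ is the subgraph of $G$ formed by all vertices and edges of $C_1,\dots,C_i$. *)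

From HB Require Import structures.
From mathcomp Require Import all_boot all_order all_algebra.
Set Implicit Arguments. Unset Strict Implicit. Unset Printing Implicit Defensive.
Import Order.TTheory GRing.Theory Num.Theory.
Local Open Scope ring_scope.

(* Edge weights are a function w : {set V} -> R (only its values on E matter). *)
Section Graphs.
Variables (V : finType) (E : {set {set V}}).

Definition simple_graph : Prop := forall e, e \in E -> #|e| = 2%N.

Definition gadj : rel V := fun u v => [set u; v] \in E.

Definition is_path (p : seq V) : bool :=
  if p is x :: q then uniq p && path gadj x q else false.

Definition pedges (p : seq V) : seq {set V} :=
  [seq [set e.1; e.2] | e <- zip p (behead p)].

Definition path_from_to (p : seq V) (x y : V) : bool :=
  [&& is_path p, head x p == x & last x p == y].

Definition is_cycle (c : seq V) : bool :=
  [&& uniq c, (2 < size c)%N & cycle gadj c].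

Definition cedges (c : seq V) : seq {set V} :=
  if c is x :: q then [seq [set e.1; e.2] | e <- zip c (rcons q x)] else [::].

Definition rooted_cycle (root : {set V}) (c : seq V) : bool :=
  is_cycle c && (root \in cedges c).

Definition connected_on (S : {set V}) : Prop :=
  forall u v, u \in S -> v \in S ->
    connect (fun a b => [&& gadj a b, a \in S & b \in S]) u v.

Definition two_connected : Prop :=
  [/\ (2 < #|V|)%N, connected_on setT & forall z, connected_on [set~ z]].

Variables (R : realDomainType) (w : {set V} -> R).

Definition pweight (p : seq V) : R := \sum_(e <- pedges p) w e.
Definition cweight (c : seq V) : R := \sum_(e <- cedges c) w e.

(* Paths / cycles are identified with their edge sets (as subgraphs). *)
Definition unambiguous : Prop :=
  (forall p q, is_path p -> is_path q -> pweight p = pweight q ->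
     [set e in pedges p] = [set e in pedges q]) /\
  (forall c d, is_cycle c -> is_cycle d -> cweight c = cweight d ->
     [set e in cedges c] = [set e in cedges d]).

Definition has_new_edge (Cs : seq (seq V)) (c : seq V) : bool :=
  has (fun e => ~~ has (fun d => e \in cedges d) Cs) (cedges c).

(* Cs = [:: C_1; C_2; ...] (0-indexed in the list) is a greedy cycle sequence *)
Definition greedy_seq (root : {set V}) (Cs : seq (seq V)) : Prop :=
  forall i, (i < size Cs)%N ->
    [/\ rooted_cycle root (nth [::] Cs i),
        has_new_edge (take i Cs) (nth [::] Cs i) &
        forall D, rooted_cycle root D -> has_new_edge (take i Cs) D ->
          cweight (nth [::] Cs i) <= cweight D].

Definition ambit_verts (Cs : seq (seq V)) (i : nat) : {set V} :=
  [set v | has (fun c => v \in c) (take i Cs)].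
Definition ambit_edges (Cs : seq (seq V)) (i : nat) : {set {set V}} :=
  [set e | has (fun c => e \in cedges c) (take i Cs)].

Definition in_ambit (Cs : seq (seq V)) (i : nat) (p : seq V) : Prop :=
  (forall v, v \in p -> v \in ambit_verts Cs i) /\
  (forall e, e \in pedges p -> e \in ambit_edges Cs i).

Definition shortest_path (p : seq V) (x y : V) : Prop :=
  path_from_to p x y /\
  forall q, path_from_to q x y -> pweight p <= pweight q.

(* Points interior to an edge uv: the point at distance a from u (and
   w(uv) - a from v), 0 < a < w(uv).  In the graph obtained by subdividing uv
   at this point x, a path from x to t consists of the segment from x to
   s in {u, v} followed by a path q of G from s to t not using the edge uv.
   We represent it by q. *)
Definition ppath (u v : V) (q : seq V) (t : V) : bool :=
  [&& is_path q, (head u q == u) || (head u q == v), last u q == t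
    & [set u; v] \notin pedges q].

Definition ppweight (u v : V) (a : R) (q : seq V) : R :=
  (if head u q == u then a else w [set u; v] - a) + pweight q.

Definition shortest_ppath (u v : V) (a : R) (q : seq V) (t : V) : Prop :=
  ppath u v q t /\
  forall q', ppath u v q' t -> ppweight u v a q <= ppweight u v a q'.

End Graphs.

From HB Require Import structures.
From mathcomp Require Import all_boot all_order all_algebra.
From mathcomp Require Import zify.
Import Order.TTheory GRing.Theory Num.Theory.
Local Open Scope ring_scope.
Set Implicit Arguments. Unset Strict Implicit.

(* Let p be a shortest path from a point of A_i to an end t of the root edge,
   and suppose p leaves A_i: at a vertex y of some C_m (m < i) it takes an edge
   f outside A_i.  As t lies on C_m, p returns to C_m after y; let c be the
   first vertex where it does.  The segment of p from y to c is a shortest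
   y-c path, so substituting it for the arc of C_m between y and c that avoids
   the root edge gives a rooted cycle D through f with w(D) <= w(C_m).  Since
   f is new with respect to C_1, ..., C_(m-1), greediness gives
   w(C_m) <= w(D), and unambiguity then forces D and C_m to have the same
   edges, contradicting f \notin C_m.  For a point inside an edge uv the
   shortest path is still geodesic in G, because a path through uv can be cut
   at uv without getting heavier. *)

Section PathsAndCycles.
Variables (V : finType) (E : {set {set V}}).
Implicit Types (x y z u v c : V) (p q s I M N X Z : seq V).

Lemma pedges_cons2 x y p : pedges (x :: y :: p) = [set x; y] :: pedges (y :: p).
Proof. by []. Qed.

Lemma pedges_cat p v q : pedges (p ++ v :: q) = pedges (rcons p v) ++ pedges (v :: q).
Proof.
elim: p => [//|x p IH]; case: p IH => [|z p] IH //.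
by rewrite /= pedges_cons2 -/(cat (z :: p) (v :: q)) IH.
Qed.

Lemma pedges_catl x s q :
  pedges ((x :: s) ++ q) = pedges (x :: s) ++ pedges (last x s :: q).
Proof.
elim: s x => [|y s IH] x; first by case: q.
by rewrite (_ : pedges ((x :: y :: s) ++ q) = [set x; y] :: pedges ((y :: s) ++ q)) // IH.
Qed.

Lemma pedges_rcons x s v :
  pedges (rcons (x :: s) v) = rcons (pedges (x :: s)) [set last x s; v].
Proof.
elim: s x => [|y s IH] x //.
by rewrite !rcons_cons pedges_cons2 -(rcons_cons y s v) IH.
Qed.

Lemma pedges_rev p : pedges (rev p) = rev (pedges p).
Proof.
elim: p => [//|x p IH]; case: p IH => [|z p] IH //.
rewrite rev_cons; case Hr: (rev (z :: p)) => [|a s].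
  by move/(congr1 size): Hr; rewrite size_rev.
rewrite pedges_rcons -Hr IH pedges_cons2 rev_cons.
have -> : last a s = z.
  have := congr1 (last z) Hr; rewrite /= => <-.
  by rewrite rev_cons last_rcons.
by rewrite setUC.
Qed.

Lemma path_gadjE x s : path (gadj E) x s = all [in E] (pedges (x :: s)).
Proof.
by elim: s x => [|y s IH] x //; rewrite [path _ _ _]/= pedges_cons2 [all _ (_ :: _)]/= IH.
Qed.

Lemma is_pathE p : is_path E p = [&& p != [::], uniq p & all [in E] (pedges p)].
Proof. by case: p => [//|x s]; rewrite /is_path path_gadjE. Qed.

Lemma is_path_rev p : is_path E (rev p) = is_path E p.
Proof. by rewrite !is_pathE -!size_eq0 size_rev rev_uniq pedges_rev all_rev. Qed.

Lemma is_path_prefix x s q : is_path E (x :: s ++ q) -> is_path E (x :: s).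
Proof.
by rewrite /is_path -cat_cons cat_uniq cat_path => /andP[/andP[-> _] /andP[-> _]].
Qed.

Lemma is_path_suffix p y q : is_path E (p ++ y :: q) -> is_path E (y :: q).
Proof.
case: p => [//|x p]; rewrite /is_path cat_uniq /= cat_path.
by case/andP=> /and4P[_ _ -> ->] /andP[_ /andP[_]].
Qed.

Lemma zip_rcons_l (s t : seq V) y : size s = size t -> zip (rcons s y) t = zip s t.
Proof. by elim: s t => [|a s IH] [|b t] //= [] /IH ->. Qed.

Lemma cedgesE x s : cedges (x :: s) = pedges (x :: rcons s x).
Proof.
rewrite /cedges /pedges [behead _]/=; congr map.
by rewrite -rcons_cons zip_rcons_l // size_rcons.
Qed.

Lemma cedges_split y M c N :
  cedges (y :: M ++ c :: N) = pedges (y :: rcons M c) ++ pedges (c :: rcons N y).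
Proof. by rewrite cedgesE rcons_cat -cat_cons pedges_cat. Qed.

Lemma perm_cedges_rot X Z : perm_eq (cedges (X ++ Z)) (cedges (Z ++ X)).
Proof.
case: X => [|x X]; first by rewrite cats0.
case: Z => [|z Z]; first by rewrite cats0.
by rewrite !cat_cons !cedges_split perm_catC.
Qed.

Lemma is_cycleE C : is_cycle E C = [&& uniq C, 2 < size C & all [in E] (cedges C)]%N.
Proof. by case: C => [//|x s]; rewrite /is_cycle cedgesE -path_gadjE. Qed.

Lemma is_cycle_rot X Z : is_cycle E (X ++ Z) = is_cycle E (Z ++ X).
Proof.
by rewrite !is_cycleE (perm_all _ (perm_cedges_rot X Z)) uniq_catC !size_cat addnC.
Qed.

Lemma cycle_arc_path y M c N : is_cycle E (y :: M ++ c :: N) -> is_path E (y :: rcons M c).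
Proof.
rewrite is_cycleE cedges_split all_cat is_pathE => /and3P[Hu _ /andP[Ha _]].
by rewrite Ha andbT; move: Hu; rewrite -cat_cons -cat_rcons cat_uniq => /andP[].
Qed.

Lemma mem_pedges p u v : [set u; v] \in pedges p -> (u \in p) && (v \in p).
Proof.
elim: p => [//|x p IH]; case: p IH => [//|y p] IH.
rewrite pedges_cons2 in_cons => /orP [/eqP H|/IH /andP [Hu Hv]].
  have Hu : u \in [set x; y] by rewrite -H set21.
  have Hv : v \in [set x; y] by rewrite -H set22.
  move: Hu Hv; rewrite !inE.
  by case/orP=> /eqP->; case/orP=> /eqP->; rewrite ?eqxx ?orbT.
by rewrite !(in_cons x) Hu Hv !orbT.
Qed.

Lemma mem_cedges C u v : [set u; v] \in cedges C -> (u \in C) && (v \in C).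
Proof.
case: C => [//|x s]; rewrite cedgesE => /mem_pedges.
by rewrite !(in_cons x) !mem_rcons !in_cons; case/andP=> /orP[->|->] /orP[->|->]; rewrite ?orbT.
Qed.

Lemma pedges_split e p :
  e \in pedges p -> exists p1 a b p2, p = p1 ++ a :: b :: p2 /\ e = [set a; b].
Proof.
elim: p => [//|x p IH]; case: p IH => [//|y p] IH.
rewrite pedges_cons2 in_cons => /orP[/eqP->|/IH[p1 [a [b [p2 [-> ->]]]]]].
  by exists [::], x, y, p.
by exists (x :: p1), a, b, p2.
Qed.

Lemma not_uniq_split s : ~~ uniq s -> exists p1 v s2 p3, s = p1 ++ v :: s2 ++ v :: p3.
Proof.
elim: s => [//|x s IH] /=; rewrite negb_and negbK.
case Hx: (x \in s) => /=.
  by move=> _; case/splitPr: Hx => s2 p3; exists [::], x, s2, p3.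
by case/IH => p1 [v [s2 [p3 ->]]]; exists (x :: p1), v, s2, p3.
Qed.

Lemma is_cycle_replace_arc y M c N I :
  is_cycle E (y :: M ++ c :: N) -> is_path E (y :: rcons I c) ->
  all [predC y :: M ++ c :: N] I -> (I != [::]) || (N != [::]) ->
  is_cycle E (y :: I ++ c :: N).
Proof.
rewrite !is_cycleE !cedges_split is_pathE !all_cat => /and3P[HuC _ /andP[_ HaN]].
case/and3P=> _ HuI HaI /allP HIC HIN.
rewrite HaI HaN /= size_cat /= !andbT; apply/andP; split; last first.
  by move: HIN; case: (I) => [|? ?]; case: (N) => [|? ?]; rewrite ?addnS.
have HyC : y \notin M ++ c :: N by case/andP: HuC.
have HuN : uniq (c :: N) by move: HuC; rewrite /= cat_uniq => /andP[_ /and3P[]].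
have HuyI : uniq (y :: I) by move: HuI; rewrite -rcons_cons rcons_uniq => /andP[].
change (uniq ((y :: I) ++ c :: N)); rewrite cat_uniq HuN HuyI andbT.
apply/hasPn => v HvN; rewrite in_cons negb_or.
have HvC : v \in M ++ c :: N by rewrite mem_cat HvN orbT.
apply/andP; split; first by apply: contraNneq HyC => <-.
by apply: contraL HvC => /HIC /=; rewrite in_cons negb_or => /andP[].
Qed.

Lemma ppath_path_from_to u v q t : ppath E u v q t -> path_from_to E q (head u q) t.
Proof.
case/and4P=> Hq _ /eqP Hl _; rewrite /path_from_to Hq -Hl.
by case: (q) Hq => //= ? ?; rewrite !eqxx.
Qed.
End PathsAndCycles.

Section Weights.
Variables (V : finType) (E : {set {set V}}) (R : realDomainType) (w : {set V} -> R).
Hypothesis w_ge0 : forall e, e \in E -> 0 <= w e.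
Implicit Types (x y c : V) (p q s I : seq V).

Lemma pweight_rev p : pweight w (rev p) = pweight w p.
Proof. by rewrite /pweight pedges_rev; apply: perm_big; rewrite perm_rev. Qed.

Lemma pweight_cat p v q : pweight w (p ++ v :: q) = pweight w (rcons p v) + pweight w (v :: q).
Proof. by rewrite /pweight pedges_cat big_cat. Qed.

Lemma pweight_catl x s q :
  pweight w ((x :: s) ++ q) = pweight w (x :: s) + pweight w (last x s :: q).
Proof. by rewrite /pweight pedges_catl big_cat. Qed.

Lemma cweight_split y M c N :
  cweight w (y :: M ++ c :: N) = pweight w (y :: rcons M c) + pweight w (c :: rcons N y).
Proof. by rewrite /cweight cedges_split big_cat. Qed.

Lemma pweight_ge0 p : all [in E] (pedges p) -> 0 <= pweight w p.
Proof. by move=> /allP Hp; rewrite /pweight big_seq sumr_ge0 // => e /Hp /w_ge0. Qed.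

Lemma shorten_walk x p : p != [::] -> all [in E] (pedges p) ->
  exists2 q, path_from_to E q (head x p) (last x p) & pweight w q <= pweight w p.
Proof.
elim: {p}(size p).+1 {-2}p (ltnSn (size p)) => [//|n IH] p Hs Hn Ha.
have [Hu|/not_uniq_split [p1 [v [s2 [p3 Hp]]]]] := boolP (uniq p).
  by exists p => //; rewrite /path_from_to is_pathE Hn Hu Ha; case: (p) Hn => //= ? ?; rewrite !eqxx.
have Hpe : pedges p = pedges (rcons p1 v) ++ (pedges (rcons (v :: s2) v) ++ pedges (v :: p3)).
  by rewrite Hp pedges_cat -cat_cons pedges_cat.
have Hpe' : pedges (p1 ++ v :: p3) = pedges (rcons p1 v) ++ pedges (v :: p3).
  by rewrite pedges_cat.
have Hs' : (size (p1 ++ v :: p3) < n)%N.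
  by move: Hs; rewrite Hp !size_cat /= size_cat /=; lia.
have [HaL [HaC HaR]] : [/\ all [in E] (pedges (rcons p1 v)),
    all [in E] (pedges (rcons (v :: s2) v)) & all [in E] (pedges (v :: p3))].
  by move: Ha; rewrite Hpe !all_cat => /and3P.
have Hn' : p1 ++ v :: p3 != [::] by case: (p1).
have Ha' : all [in E] (pedges (p1 ++ v :: p3)) by rewrite Hpe' all_cat HaL.
have [q Hq Hw] := IH _ Hs' Hn' Ha'.
exists q.
  by move: Hq; rewrite Hp !last_cat /= last_cat; case: (p1).
apply: le_trans Hw _; rewrite /pweight Hpe Hpe' !big_cat /= lerD2l lerDr.
exact: pweight_ge0 HaC.
Qed.

Definition geodesic p : Prop :=
  forall p1 y I c rest, p = p1 ++ y :: I ++ c :: rest ->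
    forall S, path_from_to E S y c -> pweight w (y :: rcons I c) <= pweight w S.

Lemma geodesic_suffix p1 p : geodesic (p1 ++ p) -> geodesic p.
Proof. by move=> Hg p2 y I c rest Hp; apply: (Hg (p1 ++ p2)); rewrite Hp catA. Qed.

Lemma splice_path x t p1 y I c rest S :
  path_from_to E (p1 ++ y :: I ++ c :: rest) x t -> path_from_to E S y c ->
  exists2 Q, path_from_to E Q x t & pweight w Q + pweight w (y :: rcons I c)
                                     <= pweight w (p1 ++ y :: I ++ c :: rest) + pweight w S.
Proof.
case: S => [//|y' S] /and3P[HP /eqP Hx /eqP Ht] /and3P[HS /= /eqP Hy /eqP Hc]; subst y'.
set P := p1 ++ _; set W := p1 ++ y :: S ++ rest.
have HeP : pedges P = pedges (rcons p1 y) ++ pedges (y :: rcons I c) ++ pedges (c :: rest).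
  by rewrite pedges_cat -cat_cons pedges_cat.
have HeW : pedges W = pedges (rcons p1 y) ++ pedges (y :: S) ++ pedges (c :: rest).
  by rewrite /W pedges_cat -cat_cons pedges_catl Hc.
have HaW : all [in E] (pedges W).
  move: HP HS; rewrite !is_pathE HeP HeW !all_cat.
  by case/and5P=> _ _ -> _ -> /and3P[_ _ ->].
have HhW : head x W = x by rewrite /W -[RHS]Hx; case: (p1).
have HlW : last x W = t by rewrite -Ht !last_cat /= !last_cat Hc.
have HWn : W != [::] by rewrite /W; case: (p1).
have [Q HQ HwQ] := shorten_walk x HWn HaW.
exists Q; first by rewrite -HhW -HlW.
have HwP : pweight w P = pweight w (rcons p1 y) + (pweight w (y :: rcons I c) + pweight w (c :: rest)).
  by rewrite pweight_cat -cat_cons pweight_cat.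
have HwW : pweight w W = pweight w (rcons p1 y) + (pweight w (y :: S) + pweight w (c :: rest)).
  by rewrite /W pweight_cat -cat_cons pweight_catl Hc.
apply: le_trans (lerD HwQ (lexx _)) _.
by rewrite HwP HwW addrAC -!addrA (addrC (pweight w (c :: rest))).
Qed.

Lemma shortest_path_geodesic p x t : shortest_path E w p x t -> geodesic p.
Proof.
move=> [Hp Hmin] p1 y I c rest Hdec S HS; rewrite Hdec in Hp Hmin.
have [Q HQ HwQ] := splice_path Hp HS.
by move: (le_trans (lerD (Hmin Q HQ) (lexx _)) HwQ); rewrite lerD2l.
Qed.

(* Reaching the first vertex from the point costs a or w(uv) - a, at most
   w(uv); so cutting a path at its edge uv and keeping the rest is no heavier. *)
Lemma ppath_of_path u v a x t Q :
  0 < a < w [set u; v] -> path_from_to E Q x t -> (x == u) || (x == v) ->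
  exists2 Q', ppath E u v Q' t
            & ppweight w u v a Q' <= (if x == u then a else w [set u; v] - a) + pweight w Q.
Proof.
move=> /andP[Ha0 Haw]; case: Q => [//|x' s] /and3P[HQ /eqP /= Hx /eqP Hl] Hxuv; subst x'.
have Hc (z : V) : 0 <= (if z == u then a else w [set u; v] - a) <= w [set u; v].
  by case: ifP => _; rewrite ?subr_ge0 ?gerBl ?ltW ?Ha0 ?Haw.
have [Huv|Huv] := boolP ([set u; v] \in pedges (x :: s)); last first.
  by exists (x :: s) => //; apply/and4P; split=> //; apply/eqP.
have [Q1 [a' [b [Q2 [HQe Hab]]]]] := pedges_split Huv.
move: HQ Hl; rewrite [x :: s]HQe -cat_rcons => HQ Hl.
have Hb : (b == u) || (b == v).
  have : b \in [set u; v] by rewrite Hab set22.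
  by rewrite !inE.
have Hn : [set u; v] \notin pedges (b :: Q2).
  rewrite Hab; apply: contraL HQ => /mem_pedges /andP[Ha' _].
  rewrite is_pathE cat_uniq; apply/negP => /and3P[_ /and3P[_ /hasPn Hd _] _].
  by move: (Hd a' Ha'); rewrite mem_rcons mem_head.
exists (b :: Q2).
  apply/and4P; split=> //; first exact: is_path_suffix HQ.
  by rewrite -Hl -[last x s]/(last x (x :: s)) HQe -cat_rcons last_cat last_rcons.
have HwQ : pweight w (rcons Q1 a' ++ b :: Q2)
    = pweight w (rcons Q1 a') + (w [set u; v] + pweight w (b :: Q2)).
  by rewrite /pweight cat_rcons pedges_cat pedges_cons2 big_cat big_cons Hab.
have H0 : 0 <= pweight w (rcons Q1 a').
  apply: pweight_ge0; move: HQ.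
  by rewrite is_pathE cat_rcons pedges_cat all_cat => /and3P[_ _ /andP[]].
have /andP[_ Hcb] := Hc b; have /andP[Hcx _] := Hc x.
rewrite HwQ /ppweight [head u (b :: Q2)]/=.
apply: le_trans (lerD Hcb (lexx _)) _.
exact: ler_wpDl Hcx (ler_wpDl H0 (lexx _)).
Qed.

Lemma shortest_ppath_geodesic u v a q t :
  0 < a < w [set u; v] -> shortest_ppath E w u v a q t -> geodesic q.
Proof.
move=> Ha [Hq Hmin] p1 y I c rest Hdec S HS.
have Hh : (head u q == u) || (head u q == v) by case/and4P: Hq.
have := ppath_path_from_to Hq; rewrite {1}Hdec => Hpft.
have [Q HQ HwQ] := splice_path Hpft HS.
have [Q' HQ' HwQ'] := ppath_of_path Ha HQ Hh.
have Hqq : pweight w q <= pweight w Q.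
  by move: (le_trans (Hmin Q' HQ') HwQ'); rewrite lerD2l.
by move: (le_trans (lerD Hqq (lexx _)) HwQ); rewrite -Hdec lerD2l.
Qed.

(* The shortcut y..c meets C only at its ends, so it replaces either arc of C
   between y and c; we replace the one avoiding e.  The new cycle has at least
   3 vertices because its first shortcut edge is not an edge of C. *)
Lemma exchange_arc e y M c N I :
  is_cycle E (y :: M ++ c :: N) -> e \in cedges (y :: M ++ c :: N) ->
  [set y; head c I] \notin cedges (y :: M ++ c :: N) ->
  is_path E (y :: rcons I c) -> all [predC y :: M ++ c :: N] I ->
  (forall S, path_from_to E S y c -> pweight w (y :: rcons I c) <= pweight w S) ->
  exists D, [/\ rooted_cycle E e D, [set y; head c I] \in cedges D
              & cweight w D <= cweight w (y :: M ++ c :: N)].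
Proof.
move=> HC He Hf HI HIC Hopt.
have Hfs : [set y; head c I] \in pedges (y :: rcons I c).
  by case: (I) => [|? ?]; rewrite /= pedges_cons2 mem_head.
have [HeN|HeM] := boolP (e \in pedges (c :: rcons N y)).
  have Hsz : (I != [::]) || (N != [::]).
    by move: Hf; case: (I) (N) => [|? ?] [|? ?] //; rewrite cedges_split mem_cat /= inE setUC eqxx orbT.
  exists (y :: I ++ c :: N); split.
  - by rewrite /rooted_cycle (is_cycle_replace_arc HC HI HIC Hsz) cedges_split mem_cat HeN orbT.
  - by rewrite cedges_split mem_cat Hfs.
  - rewrite !cweight_split lerD2r; apply: Hopt.
    by rewrite /path_from_to (cycle_arc_path HC) /= last_rcons !eqxx.
have {HeM} HeM : e \in pedges (y :: rcons M c) by move: He; rewrite cedges_split mem_cat (negbTE HeM) orbF.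
have HC' : is_cycle E ((c :: N) ++ y :: M) by rewrite -is_cycle_rot.
have Hrev : rev (y :: rcons I c) = c :: rcons (rev I) y by rewrite rev_cons rev_rcons.
have HI' : is_path E (c :: rcons (rev I) y) by rewrite -Hrev is_path_rev.
have HIC' : all [predC c :: N ++ y :: M] (rev I).
  by rewrite all_rev; apply: sub_all HIC => v /=; rewrite -!cat_cons !mem_cat orbC.
have Hsz : (rev I != [::]) || (M != [::]).
  rewrite -size_eq0 size_rev size_eq0; move: Hf; rewrite cedges_split mem_cat.
  by case: (I) (M) => [|? ?] [|? ?] //; rewrite [rcons _ _]/= [head _ _]/= pedges_cons2 mem_head.
exists (c :: rev I ++ y :: M); split.
- by rewrite /rooted_cycle (is_cycle_replace_arc HC' HI' HIC' Hsz) cedges_split mem_cat HeM orbT.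
- by rewrite cedges_split mem_cat -Hrev pedges_rev mem_rev Hfs.
- have HNr : rev (c :: rcons N y) = y :: rcons (rev N) c by rewrite rev_cons rev_rcons.
  rewrite !cweight_split addrC lerD2l -Hrev pweight_rev -(pweight_rev (c :: _)) HNr.
  apply: Hopt; rewrite /path_from_to -HNr is_path_rev (cycle_arc_path HC') HNr /=.
  by rewrite last_rcons !eqxx.
Qed.

Lemma exchange_cycle e C y q :
  is_cycle E C -> e \in cedges C -> [set y; head y q] \notin cedges C -> y \in C ->
  is_path E (y :: q) -> has [in C] q -> geodesic (y :: q) ->
  exists D, [/\ rooted_cycle E e D, [set y; head y q] \in cedges D & cweight w D <= cweight w C].
Proof.
move=> HC He Hf Hy Hq Hhit Hgeo; case/splitPr: Hy HC He Hf Hhit => X Z HC He Hf Hhit.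
have Hperm := perm_cedges_rot X (y :: Z).
have Hmem : X ++ y :: Z =i y :: Z ++ X by move=> v; rewrite -cat_cons !mem_cat orbC.
case/split_find: Hhit Hq Hgeo Hf => c I rest Hc HI Hq Hgeo Hf.
have Hcy : c != y.
  by apply: contraTneq Hq => ->; rewrite /is_path /= mem_cat mem_rcons mem_head.
have [M [N HZX]] : exists M N, Z ++ X = M ++ c :: N.
  have : c \in Z ++ X by move: Hc; rewrite /= Hmem in_cons (negbTE Hcy).
  by move: (Z ++ X) => s /splitPr[M N]; exists M, N.
have HfI : [set y; head y (rcons I c ++ rest)] = [set y; head c I] by case: (I).
have [D [HD HfD HwD]] : exists D, [/\ rooted_cycle E e D, [set y; head c I] \in cedges D
                                    & cweight w D <= cweight w (y :: M ++ c :: N)].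
  apply: exchange_arc.
  - by rewrite -HZX -cat_cons -is_cycle_rot.
  - by rewrite -HZX -(perm_mem Hperm).
  - by rewrite -HZX -(perm_mem Hperm) -HfI.
  - exact: (@is_path_prefix _ _ _ _ rest).
  - by rewrite all_predC; apply: contra HI => /hasP[v Hv HvC]; apply/hasP; exists v; rewrite //= Hmem HZX.
  - by apply: (Hgeo [::]); rewrite /= cat_rcons.
exists D; split=> //; first by rewrite HfI.
by apply: (le_trans HwD); rewrite /cweight -HZX (perm_big _ Hperm).
Qed.
End Weights.

Section Ambits.
Variables (V : finType) (E : {set {set V}}) (R : realDomainType) (w : {set V} -> R).
Variables (t1 t2 : V) (Cs : seq (seq V)) (i : nat).
Hypothesis greedy : greedy_seq E w [set t1; t2] Cs.
Hypothesis unamb : unambiguous E w.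

Lemma ambit_edge_verts y z : [set y; z] \in ambit_edges Cs i ->
  (y \in ambit_verts Cs i) && (z \in ambit_verts Cs i).
Proof.
rewrite !inE => /hasP [C HC Hin]; case/andP: (mem_cedges Hin) => Hy Hz.
by apply/andP; split; apply/hasP; exists C.
Qed.

Lemma in_ambit_of_edges x r : x \in ambit_verts Cs i ->
  (forall p1 y z p2, x :: r = p1 ++ y :: z :: p2 -> y \in ambit_verts Cs i ->
     [set y; z] \in ambit_edges Cs i) ->
  in_ambit Cs i (x :: r).
Proof.
elim: r x => [|z r IH] x Hx Hedge.
  by split => [v|//]; rewrite mem_seq1 => /eqP ->.
have Hxz := Hedge [::] x z r erefl Hx.
have [IHv IHe] : in_ambit Cs i (z :: r).
  apply: IH => [|p1 y z' p2 Hr]; first by case/andP: (ambit_edge_verts Hxz).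
  by apply: (Hedge (x :: p1)); rewrite Hr.
split => [v|e]; first by rewrite in_cons => /orP [/eqP ->|/IHv].
by rewrite pedges_cons2 in_cons => /orP [/eqP ->|/IHe].
Qed.

Lemma geodesic_first_edge_in_ambit y q t :
  t \in [:: t1; t2] -> y \in ambit_verts Cs i -> is_path E (y :: q) -> last y q = t ->
  q != [::] -> geodesic E w (y :: q) -> [set y; head y q] \in ambit_edges Cs i.
Proof.
move=> Ht Hy Hp Hl Hq Hgeo; apply: contraT => Hf.
move: Hy; rewrite inE => /(has_nthP [::]) [m Hm Hym].
have [Hmi Hms] : (m < i)%N /\ (m < size Cs)%N by move: Hm; rewrite size_take_min leq_min => /andP.
rewrite nth_take // in Hym.
have [/andP[Hcyc He] _ Hmin] := greedy Hms.
have Ht0 : t \in nth [::] Cs m.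
  by case/andP: (mem_cedges He) => Ht1 Ht2; move: Ht; rewrite !inE => /orP[] /eqP ->.
have Hf0 : [set y; head y q] \notin cedges (nth [::] Cs m).
  by apply: contra Hf => H; rewrite inE; apply/(has_nthP [::]); exists m; rewrite ?nth_take.
have Hhit : has [in nth [::] Cs m] q.
  by apply/hasP; exists t => //; rewrite -Hl; case: (q) Hq => //= ? ? _; exact: mem_last.
have [D [HD HfD HwD]] := exchange_cycle Hcyc He Hf0 Hym Hp Hhit Hgeo.
have Hnew : has_new_edge (take m Cs) D.
  apply/hasP; exists [set y; head y q] => //.
  apply: contra Hf => /hasP [C HC Hin]; rewrite inE; apply/hasP; exists C => //.
  by move: HC; rewrite -(minn_idPl (ltnW Hmi)) take_min => /mem_take.
have Heq : cweight w D = cweight w (nth [::] Cs m) by apply/le_anti; rewrite Hmin // HwD.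
case/andP: HD => HDc _; have /setP/(_ [set y; head y q]) := unamb.2 _ _ HDc Hcyc Heq.
by rewrite !inE HfD (negbTE Hf0).
Qed.

Lemma geodesic_in_ambit x t p :
  t \in [:: t1; t2] -> x \in ambit_verts Cs i -> path_from_to E p x t -> geodesic E w p ->
  in_ambit Cs i p.
Proof.
case: p => [//|x' r] Ht Hx /and3P[Hp /eqP /= Hx' /eqP Hl] Hgeo; subst x'.
apply: in_ambit_of_edges => // p1 y z p2 Hr Hy.
rewrite Hr in Hp Hgeo; rewrite -[last x r]/(last x (x :: r)) Hr in Hl.
apply: (@geodesic_first_edge_in_ambit y (z :: p2) t) => //.
- exact: is_path_suffix Hp.
- by move: Hl; rewrite last_cat.
- exact: geodesic_suffix Hgeo.
Qed.

End Ambits.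

Theorem lemma2 (V : finType) (E : {set {set V}}) (R : realFieldType)
    (w : {set V} -> R) (t1 t2 : V) (Cs : seq (seq V)) (i : nat) :
  simple_graph E ->
  two_connected E ->
  (forall e, e \in E -> 0 < w e) ->
  unambiguous E w ->
  [set t1; t2] \in E ->
  greedy_seq E w [set t1; t2] Cs ->
  (i <= size Cs)%N ->
  (forall x t p, x \in ambit_verts Cs i -> t \in [:: t1; t2] ->
     shortest_path E w p x t -> in_ambit Cs i p) /\
  (forall u v a t q, [set u; v] \in ambit_edges Cs i ->
     0 < a < w [set u; v] -> t \in [:: t1; t2] ->
     shortest_ppath E w u v a q t -> in_ambit Cs i q).
Proof.
move=> _ _ w_gt0 unamb _ greedy _.
have w_ge0 e : e \in E -> 0 <= w e by move/w_gt0/ltW.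
split=> [x t p Hx Ht Hp | u v a t q Huv Ha Ht Hq].
  exact (geodesic_in_ambit greedy unamb Ht Hx Hp.1 (shortest_path_geodesic w_ge0 Hp)).
have Hx : head u q \in ambit_verts Cs i.
  case/and4P: Hq.1 => _ Hh _ _; case/andP: (ambit_edge_verts Huv) => Hu Hv.
  by case/orP: Hh => /eqP ->.
exact (geodesic_in_ambit greedy unamb Ht Hx (ppath_path_from_to Hq.1)
                         (shortest_ppath_geodesic w_ge0 Ha Hq)).
Qed.
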